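(* Let $V_0,\dots,V_{2^n}$ be the $2^n+1$ unitary operators that simultaneously diagonalize the $2^n+1$ maximally commuting subsets $S_j$ of non-identity $n$-qubit Pauli operators, i.e. $S_j = \{ s_{j,\vec a} V_j Z_{\vec a} V_j^\dagger : \vec a \in\{0,1\}^n, \vec a\neq \vec 0\}$ with signs $s_{j,\vec a}\in\{-1,1\}$. Let $\mathcal{V} = \{((2^n+1)^{-1}, V_j^\dagger)\}_{j=0}^{2^n}$ be the uniform ensemble over the adjoint unitaries. Let $\mathcal{M}$ be the measure-and-prepare channel $$\mathcal{M}(\rho) = \sum_{\vec k\in\{0,1\}^n} \mathrm{tr}\big[|\vec k\rangle\langle \vec k|\,\rho\big]\,\rho_{\vec k},\qquad \rho_{\vec k} = \sum_{\vec l\in\{0,1\}^n} \frac{1-\delta_{\vec k,\vec l}}{2^n-1}\,|\vec l\rangle\langle \vec l|,$$ which measures in the computational basis and, upon outcome $|\vec k\rangle$, prepares the uniform mixture over all computational basis states orthogonal to $|\vec k\rangle$. Then the $n$-qubit depolarizing channel with zero entanglement fidelity, $$\mathcal{D}_0(\rho) = \frac{1}{2^{2n}-1}\sum_{P\in\mathcal{Q}_n^*} P\rho P,$$ satisfies $\mathcal{D}_0 = \mathbb{E}_{\mathcal{V}}(\mathcal{M})$, where $\mathbb{E}_{\mathcal{V}}(\mathcal{M})(\rho) = \frac{1}{2^n+1}\sum_{j=0}^{2^n} V_j\,\mathcal{M}(V_j^\dagger \rho V_j)\,V_j^\dagger$. Moreover, this construction (a mixture of $2^n+1$ measure-and-prepare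 circuits) uses the minimal number of measure-and-prepare circuits required to realize $\mathcal{D}_0$ without ancilla qubits.
   Context: $\mathcal{Q}_n$ denotes the $n$-qubit Pauli operators modulo phase (a basis of operators on $n$ qubits), and $\mathcal{Q}_n^* = \mathcal{Q}_n\setminus\{I^{\otimes n}\}$. $Z_{\vec a} = \bigotimes_i Z^{a_i}$. The set $\mathcal{Q}_n^*$ is partitioned into $2^n+1$ disjoint maximally commuting subsets $S_j$, each of size $2^n-1$. For an ensemble $\mathcal{E}=\{(p_i,U_i)\}$, the $\mathcal{E}$-channel-twirl of a channel $\mathcal{C}$ is $\rho\mapsto \sum_i p_i U_i^\dagger \mathcal{C}(U_i\rho U_i^\dagger) U_i$. *)

From mathcomp Require Import all_boot all_order all_algebra.
From mathcomp Require Import algC.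
Set Implicit Arguments. Unset Strict Implicit. Unset Printing Implicit Defensive.
Import Order.TTheory GRing.Theory Num.Theory.
Local Open Scope ring_scope.

Definition B (n : nat) := {ffun 'I_n -> bool}.
Definition Dim (n : nat) := #|B n|.
Definition b0 {n} : B n := [ffun _ => false].
Definition xorB {n} (x y : B n) : B n := [ffun i => addb (x i) (y i)].
Definition bdot {n} (x y : B n) : nat := \sum_(i < n) (x i && y i).

(* matrices on (C^2)^{⊗n}, rows/cols indexed by bit strings via enum_val *)
Notation Mat n := ('M[algC]_(Dim n)).

Definition adj {m k} (A : 'M[algC]_(m, k)) : 'M[algC]_(k, m) := (map_mx Num.conj A)^T.
Definition unitary {m} (U : 'M[algC]_m) : Prop := U *m adj U = 1%:M.
Definition psd {m} (A : 'M[algC]_m) : Prop :=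
  A = adj A /\ forall v : 'cV[algC]_m, 0 <= (adj v *m A *m v) 0 0.
Definition density {m} (A : 'M[algC]_m) : Prop := psd A /\ \tr A = 1.

(* Hermitian Pauli operator P_{x,z} = i^{x.z} X^x Z^z = ⊗_k i^{x_k z_k} X^{x_k} Z^{z_k};
   it maps |c> to i^{x.z} (-1)^{z.c} |c xor x>. *)
Definition pauli {n} (x z : B n) : Mat n :=
  \matrix_(r, c) if enum_val r == xorB (enum_val c) x
                 then 'i ^+ (bdot x z) * (-1) ^+ (bdot z (enum_val c)) else 0.

Definition Zop {n} (a : B n) : Mat n := pauli b0 a.

Definition D0 {n} (rho : Mat n) : Mat n :=
  ((2 ^ (2 * n) - 1)%:R)^-1 *:
    \sum_(p : B n * B n | p != (b0, b0)) (pauli p.1 p.2 *m rho *m adj (pauli p.1 p.2)).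

Definition proj {n} (k : 'I_(Dim n)) : Mat n := delta_mx k k.

Definition rho_k {n} (k : 'I_(Dim n)) : Mat n :=
  \sum_(l < Dim n | l != k) ((2 ^ n - 1)%:R)^-1 *: proj l.

Definition Mchan {n} (rho : Mat n) : Mat n :=
  \sum_(k < Dim n) \tr (proj k *m rho) *: rho_k k.

Definition twirlM {n} (V : 'I_(2 ^ n + 1) -> Mat n) (rho : Mat n) : Mat n :=
  ((2 ^ n + 1)%:R)^-1 *:
    \sum_(j < 2 ^ n + 1) (V j *m Mchan (adj (V j) *m rho *m V j) *m adj (V j)).

(* a general ancilla-free measure-and-prepare circuit: apply U^dag, measure in
   the computational basis, on outcome k prepare the state sigma k *)
Definition mp_circuit {n} (U : Mat n) (sigma : 'I_(Dim n) -> Mat n) (rho : Mat n) : Mat n :=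
  \sum_(k < Dim n) \tr (proj k *m (adj U *m rho *m U)) *: sigma k.

From mathcomp Require Import all_boot all_order all_algebra.
From mathcomp Require Import algC.
From mathcomp Require Import ring zify.
Set Implicit Arguments. Unset Strict Implicit. Unset Printing Implicit Defensive.
Import Order.TTheory GRing.Theory Num.Theory.
Local Open Scope ring_scope.

(* Conjugating by all 4^n Pauli operators sends A to 2^n tr(A) I, so
   D0(rho) = (2^n tr(rho) I - rho) / (4^n - 1).  The measure-and-prepare channel
   is M(S) = (tr(S) I - Delta(S)) / (2^n - 1), where the dephasing Delta is the
   twirl over the diagonal Paulis Z_a.  Conjugating by V_j turns it into the
   twirl over the stabilizer group of S_j; as the 2^n + 1 sets S_j partition the
   non-identity Paulis, averaging over j reassembles the full Pauli twirl.
   Conversely, a mixture of m measure-and-prepare circuits sees rho only through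
   tr(rho) and the functionals <k| U_i^* rho U_i |k>, at most m (2^n - 1) + 1 of
   them independent; for m <= 2^n some nonzero traceless rho is invisible to all
   of them, whereas D0(rho) = - rho / (4^n - 1) <> 0. *)

Section Adjoint.
Variables m k : nat.

Lemma adjM (A : 'M[algC]_(m, k)) (B : 'M[algC]_(k, m)) : adj (A *m B) = adj B *m adj A.
Proof. by rewrite /adj map_mxM trmx_mul. Qed.

Lemma adjZ (a : algC) (A : 'M[algC]_(m, k)) : adj (a *: A) = a^* *: adj A.
Proof. by rewrite /adj map_mxZ linearZ. Qed.

Lemma adjK (A : 'M[algC]_(m, k)) : adj (adj A) = A.
Proof. by apply/matrixP => i j; rewrite !mxE conjCK. Qed.

Lemma adj1 : adj (1%:M : 'M[algC]_m) = 1%:M.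
Proof. by rewrite /adj map_scalar_mx rmorph1 tr_scalar_mx. Qed.

Lemma mxtrace_unitary_conj (U A : 'M[algC]_m) : unitary U -> \tr (adj U *m A *m U) = \tr A.
Proof. by move=> hU; rewrite mxtrace_mulC mulmxA hU mul1mx. Qed.

Lemma mxtrace_delta_mul (A : 'M[algC]_m) i : \tr (delta_mx i i *m A) = A i i.
Proof.
rewrite -(@mul_delta_mx _ _ 1 _ ord0 i i) -mulmxA mxtrace_mulC -rowE -colE.
by rewrite /mxtrace big_ord1 !mxE.
Qed.

End Adjoint.

Section BitStrings.
Variable n : nat.

Lemma DimE : Dim n = (2 ^ n)%N.
Proof. by rewrite /Dim /B card_ffun card_bool card_ord. Qed.

Lemma Dim_neq0 : (Dim n)%:R != 0 :> algC.
Proof. by rewrite DimE pnatr_eq0 expn_eq0. Qed.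

Lemma xorBK (x y : B n) : xorB (xorB x y) y = x.
Proof. by apply/ffunP => i; rewrite !ffunE addbK. Qed.

Lemma xorB0 (x : B n) : xorB x b0 = x.
Proof. by apply/ffunP => i; rewrite !ffunE addbF. Qed.

Lemma xorB_inj (x : B n) : injective (xorB x).
Proof.
by move=> y z /ffunP yz; apply/ffunP => i; have := yz i; rewrite !ffunE => /addbI.
Qed.

Lemma xorB_eq0 (u v : B n) : (xorB u v == b0) = (u == v).
Proof.
apply/eqP/eqP => [/ffunP uv|->]; last by apply/ffunP => i; rewrite !ffunE addbb.
by apply/ffunP => i; have := uv i; rewrite !ffunE; case: (u i); case: (v i).
Qed.

Lemma bdotC (x y : B n) : bdot x y = bdot y x.
Proof. by apply: eq_bigr => i _; rewrite andbC. Qed.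

Lemma bdot0l (y : B n) : bdot b0 y = 0%N.
Proof. by rewrite /bdot big1 // => i _; rewrite ffunE. Qed.

Lemma sign_bdot (z w : B n) :
  (-1 : algC) ^+ (bdot z w) = \prod_(i < n) (-1) ^+ (z i && w i).
Proof. exact: expr_sum. Qed.

Lemma sign_bdotD (z u v : B n) :
  (-1 : algC) ^+ (bdot z u + bdot z v) = (-1) ^+ (bdot z (xorB u v)).
Proof.
rewrite exprD !sign_bdot -big_split /=; apply: eq_bigr => i _; rewrite ffunE.
by case: (z i); case: (u i); case: (v i); rewrite /= ?mulr1 ?mul1r ?mulrNN ?mulr1.
Qed.

Lemma sum_sign_bdot (w : B n) :
  \sum_(z : B n) (-1 : algC) ^+ (bdot z w) = (w == b0)%:R * (Dim n)%:R.
Proof.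
transitivity (\prod_(i < n) \sum_(b : bool) (-1 : algC) ^+ (b && w i)).
  by rewrite bigA_distr_bigA /=; apply: eq_bigr => z _; exact: sign_bdot.
have [->|w0] := eqVneq w b0.
  under eq_bigr do rewrite ffunE big_bool /=.
  by rewrite mul1r prodr_const card_ord DimE natrX.
have [i wi] : exists i, w i.
  apply/existsP; apply: contraR w0 => /existsPn wF.
  by apply/eqP/ffunP => i; rewrite ffunE; apply/negbTE/wF.
by rewrite (bigD1 i) //= big_bool /= wi /= expr1 addNr mul0r mul0r.
Qed.

End BitStrings.

Section Pauli.
Variable n : nat.
Local Notation ev := (@enum_val (B n) _).
Local Notation er := (@enum_rank (B n)).
Local Notation d := ((Dim n)%:R : algC).

Lemma sum_xorB_shift (F : 'I_(Dim n) -> algC) (r : 'I_(Dim n)) (x : B n) :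
  \sum_c (if ev r == xorB (ev c) x then F c else 0) = F (er (xorB (ev r) x)).
Proof.
rewrite -big_mkcond (big_pred1 (er (xorB (ev r) x))) // => c /=.
rewrite -(inj_eq enum_val_inj) enum_rankK.
by apply/eqP/eqP => ->; rewrite xorBK.
Qed.

Lemma sum_enum_rank (F : 'I_(Dim n) -> algC) : \sum_(y : B n) F (er y) = \sum_k F k.
Proof. by rewrite (reindex er) //; apply: onW_bij; exact: enum_rank_bij. Qed.

(* The phase [i^(x.z)] of P_{x,z} cancels against its conjugate. *)
Lemma pauli_conjE (x z : B n) (A : Mat n) r c :
  (pauli x z *m A *m adj (pauli x z)) r c =
  (-1) ^+ (bdot z (xorB (ev r) x) + bdot z (xorB (ev c) x)) *
    A (er (xorB (ev r) x)) (er (xorB (ev c) x)).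
Proof.
set phase : algC := 'i ^+ bdot x z.
have phaseK : phase * phase^* = 1 by rewrite -normCK normrX normCi !expr1n.
have left_mul b : (pauli x z *m A) r b =
    phase * (-1) ^+ bdot z (xorB (ev r) x) * A (er (xorB (ev r) x)) b.
  rewrite mxE (eq_bigr (fun a => if ev r == xorB (ev a) x
      then phase * (-1) ^+ bdot z (ev a) * A a b else 0)).
    by rewrite sum_xorB_shift enum_rankK.
  by move=> a _; rewrite mxE; case: ifP; rewrite ?mul0r.
rewrite mxE (eq_bigr (fun b => if ev c == xorB (ev b) x
    then (pauli x z *m A) r b * (phase^* * (-1) ^+ bdot z (ev b)) else 0)); last first.
  move=> b _; rewrite /adj !mxE; case: ifP; rewrite ?conjC0 ?mulr0 //.
  by rewrite rmorphM rmorph_sign.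
rewrite sum_xorB_shift enum_rankK left_mul exprD.
by rewrite mulrACA (mulrAC phase) phaseK mul1r [A _ _ * _]mulrC mulrA.
Qed.

Lemma pauli00 : pauli b0 b0 = 1%:M :> Mat n.
Proof.
apply/matrixP => r c; rewrite !mxE xorB0 bdot0l mul1r (inj_eq enum_val_inj).
by rewrite bdot0l; case: eqP.
Qed.

Lemma sum_pauli_conj_z (x : B n) (A : Mat n) r c :
  (\sum_(z : B n) pauli x z *m A *m adj (pauli x z)) r c =
  (r == c)%:R * d * A (er (xorB (ev r) x)) (er (xorB (ev r) x)).
Proof.
rewrite summxE; under eq_bigr do rewrite pauli_conjE sign_bdotD.
rewrite -mulr_suml sum_sign_bdot xorB_eq0.
have [->|rc] := eqVneq r c; first by rewrite !eqxx.
have : (xorB (ev r) x == xorB (ev c) x) = false.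
  by apply: contraNF rc => /eqP /(congr1 (xorB^~ x)); rewrite !xorBK => /enum_val_inj ->.
by move ->; rewrite !mul0r.
Qed.

Lemma sum_pauli_conj (A : Mat n) :
  \sum_(p : B n * B n) pauli p.1 p.2 *m A *m adj (pauli p.1 p.2) = (d * \tr A) *: 1%:M.
Proof.
apply/matrixP => r c.
rewrite -(pair_big predT predT (fun x z => pauli x z *m A *m adj (pauli x z))) /=.
rewrite summxE; under eq_bigr do rewrite sum_pauli_conj_z.
rewrite -mulr_sumr !mxE /mxtrace -sum_enum_rank.
rewrite [in RHS](reindex_inj (@xorB_inj n (ev r))) /=.
by rewrite [RHS]mulrC mulrA.
Qed.

Lemma sum_nontrivial_pauli_conj (A : Mat n) :
  \sum_(p | p != (b0, b0)) pauli p.1 p.2 *m A *m adj (pauli p.1 p.2) =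
  (d * \tr A) *: 1%:M - A.
Proof.
rewrite -sum_pauli_conj [in RHS](bigD1 (b0, b0)) //= pauli00 mul1mx adj1 mulmx1.
by rewrite addrAC subrr add0r.
Qed.

Lemma D0E (rho : Mat n) :
  D0 rho = ((2 ^ (2 * n) - 1)%:R)^-1 *: ((d * \tr rho) *: 1%:M - rho).
Proof. by rewrite /D0 sum_nontrivial_pauli_conj. Qed.

Lemma mxtrace_Zop (a : B n) : \tr (Zop a) = (a == b0)%:R * d.
Proof.
rewrite /mxtrace -sum_enum_rank -sum_sign_bdot; apply: eq_bigr => y _.
by rewrite mxE enum_rankK xorB0 eqxx bdot0l mul1r bdotC.
Qed.

End Pauli.

Definition dephase {n} (S : Mat n) : Mat n := \sum_k S k k *: proj k.

Section MeasurePrepare.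
Variable n : nat.
Local Notation d := ((Dim n)%:R : algC).

Lemma dephaseE (S : Mat n) r c : dephase S r c = (r == c)%:R * S r r.
Proof.
rewrite /dephase summxE (bigD1 r) //= big1 => [|k kr]; last first.
  by rewrite !mxE eq_sym (negbTE kr) mulr0.
by rewrite !mxE eqxx addr0 mulrC eq_sym.
Qed.

Lemma rho_kE k : rho_k k = ((2 ^ n - 1)%:R)^-1 *: (1%:M - proj k) :> Mat n.
Proof.
rewrite /rho_k -scaler_sumr mx1_sum_delta [in RHS](bigD1 k) //=.
by rewrite addrAC subrr add0r.
Qed.

Lemma Mchan_dephase (S : Mat n) :
  Mchan S = ((2 ^ n - 1)%:R)^-1 *: (\tr S *: 1%:M - dephase S).
Proof.
rewrite /Mchan; under eq_bigr do rewrite mxtrace_delta_mul rho_kE.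
rewrite /dephase /mxtrace scaler_suml -sumrB scaler_sumr; apply: eq_bigr => k _.
by rewrite -scalerBr !scalerA mulrC.
Qed.

Lemma sum_Zop_conj (S : Mat n) :
  \sum_(a : B n) Zop a *m S *m adj (Zop a) = d *: dephase S.
Proof.
apply/matrixP => r c; rewrite sum_pauli_conj_z !mxE dephaseE xorB0 enum_valK.
by rewrite mulrA [_ * d]mulrC.
Qed.

End MeasurePrepare.

Lemma Mchan_unitary_conj n (V : Mat n) (rho : Mat n) : unitary V ->
  V *m Mchan (adj V *m rho *m V) *m adj V =
  ((2 ^ n - 1)%:R)^-1 *: (\tr rho *: 1%:M - ((Dim n)%:R)^-1 *:
     \sum_(a : B n) (V *m Zop a *m adj V) *m rho *m adj (V *m Zop a *m adj V)).
Proof.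
move=> hV; rewrite Mchan_dephase mxtrace_unitary_conj //.
rewrite -[dephase _](scalerK (@Dim_neq0 n)) -sum_Zop_conj.
rewrite -scalemxAr -scalemxAl mulmxBr mulmxBl -!scalemxAr -!scalemxAl mulmx1 hV.
rewrite mulmx_sumr mulmx_suml; congr (_ *: (_ - _ *: _)); apply: eq_bigr => a _.
by rewrite !adjM adjK !mulmxA.
Qed.

Section Twirl.
Variables (n : nat) (V : 'I_(2 ^ n + 1) -> Mat n).
Variables (f : 'I_(2 ^ n + 1) -> B n -> B n * B n) (s : 'I_(2 ^ n + 1) -> B n -> algC).
Hypothesis hV : forall j, unitary (V j).
Hypothesis hs : forall j a, s j a = 1 \/ s j a = -1.
Hypothesis hdiag : forall j (a : B n), a != b0 ->
  V j *m Zop a *m adj (V j) = s j a *: pauli (f j a).1 (f j a).2.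
Hypothesis hinj : forall j a j' a', a != b0 -> a' != b0 -> f j a = f j' a' ->
  j = j' /\ a = a'.
Hypothesis hsurj : forall p : B n * B n, p != (b0, b0) ->
  exists j a, a != b0 /\ f j a = p.

Lemma f_nontrivial j a : a != b0 -> f j a != (b0, b0).
Proof.
move=> a0; apply/eqP => fja; have := congr1 mxtrace (hdiag j a0).
rewrite fja pauli00 mxtrace_mulC mulmxA (mulmx1C (hV j)) mul1mx.
rewrite mxtrace_Zop (negbTE a0) mul0r.
rewrite mxtraceZ mxtrace1 => /esym/eqP; rewrite mulf_eq0 (negbTE (@Dim_neq0 n)) orbF.
by case: (hs j a) => ->; rewrite ?oppr_eq0 oner_eq0.
Qed.

Lemma sum_conj_Zop_stabilizer j (rho : Mat n) :
  \sum_(a : B n) (V j *m Zop a *m adj (V j)) *m rho *m adj (V j *m Zop a *m adj (V j)) =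
  rho + \sum_(a | a != b0) pauli (f j a).1 (f j a).2 *m rho *m adj (pauli (f j a).1 (f j a).2).
Proof.
rewrite (bigD1 b0) //= /Zop pauli00 mulmx1 hV mul1mx adj1 mulmx1; congr (_ + _).
apply: eq_bigr => a a0; rewrite hdiag // adjZ -scalemxAl -scalemxAr -scalemxAl scalerA.
by case: (hs j a) => ->; rewrite ?conjC1 ?conjCN1 ?mulrNN mulr1 scale1r.
Qed.

Lemma sum_stabilizer_labels (g : B n * B n -> Mat n) :
  \sum_j \sum_(a | a != b0) g (f j a) = \sum_(p | p != (b0, b0)) g p.
Proof.
rewrite pair_big_dep /= (partition_big (fun q => f q.1 q.2) (fun p => p != (b0, b0))) /=;
  last by move=> [j a] /= a0; exact: f_nontrivial.
apply: eq_bigr => p p0; have [j [a [a0 fja]]] := hsurj p0.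
rewrite (big_pred1 (j, a)) /= ?fja // => -[j' a'] /=.
apply/idP/eqP => [/andP[a'0 /eqP fj'a']|[-> ->]]; last by rewrite a0 fja eqxx.
by have [-> ->] := hinj a'0 a0 (etrans fj'a' (esym fja)).
Qed.

Lemma D0_twirlM (rho : Mat n) : D0 rho = twirlM V rho.
Proof.
rewrite /twirlM; under eq_bigr do rewrite Mchan_unitary_conj // sum_conj_Zop_stabilizer.
rewrite -scaler_sumr sumrB sumr_const card_ord -scaler_sumr big_split /= sumr_const card_ord.
rewrite (sum_stabilizer_labels (fun p => pauli p.1 p.2 *m rho *m adj (pauli p.1 p.2))).
rewrite sum_nontrivial_pauli_conj D0E -!scaler_nat.
have -> : (2 ^ (2 * n) - 1 = (2 ^ n - 1) * (2 ^ n + 1))%N.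
  by rewrite mulnC expnM; have := expn_gt0 2 n; move: (2 ^ n)%N => y; nia.
have -> : (Dim n)%:R = (2 ^ n)%:R :> algC by rewrite DimE.
have x0 : (2 ^ n)%:R != 0 :> algC by rewrite pnatr_eq0 expn_eq0.
have x1 : (2 ^ n + 1)%:R != 0 :> algC by rewrite pnatr_eq0 addn1.
rewrite natrM invfM natrD in x1 *.
apply/matrixP => r c; rewrite !mxE.
move: ((2 ^ n - 1)%:R^-1 : algC) ((2 ^ n)%:R : algC) x0 x1 => e x x0 x1.
field.
by rewrite x0 x1.
Qed.

End Twirl.

Lemma exists_mxtrace_orthogonal (d : nat) (T : finType) (K : T -> 'M[algC]_d) :
  (#|T| < d * d)%N -> exists2 rho : 'M[algC]_d, rho != 0 & forall t, \tr (K t *m rho) = 0.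
Proof.
move=> hT.
pose G : 'M[algC]_(d * d, #|T|) :=
  \matrix_(r, t) \tr (K (enum_val t) *m vec_mx (delta_mx 0 r)).
have : kermx G != 0 by rewrite -mxrank_eq0 mxrank_ker; have := rank_leq_col G; lia.
case/rowV0Pn => v /sub_kermxP vG v0; exists (vec_mx v).
  by apply: contraNneq v0 => v0; rewrite -(vec_mxK v) v0 linear0.
move=> t; have := congr1 (fun M : 'M_(1, #|T|) => M 0 (enum_rank t)) vG; rewrite !mxE => <-.
rewrite {1}(row_sum_delta v) linear_sum mulmx_sumr raddf_sum /=.
by apply: eq_bigr => r _; rewrite mxE enum_rankK linearZ -scalemxAr mxtraceZ.
Qed.

Lemma mxtrace_mp_circuit n (U : Mat n) sigma (rho : Mat n) :
  unitary U -> (forall k, \tr (sigma k) = 1) -> \tr (mp_circuit U sigma rho) = \tr rho.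
Proof.
move=> hU hsigma; rewrite /mp_circuit raddf_sum /= -(mxtrace_unitary_conj rho hU).
by apply: eq_bigr => k _; rewrite mxtraceZ hsigma mulr1 mxtrace_delta_mul.
Qed.

(* The last diagonal entry of U^* rho U is fixed by the others and the trace,
   so there are only m (d - 1) + 1 <= d^2 - d + 1 < d^2 linear constraints. *)
Lemma exists_traceless_zero_diagonals (d m : nat) (U : 'I_m -> 'M[algC]_d) :
  (1 < d)%N -> (m <= d)%N -> (forall i, unitary (U i)) ->
  exists2 rho : 'M[algC]_d, rho != 0 &
    \tr rho = 0 /\ forall i k, (adj (U i) *m rho *m U i) k k = 0.
Proof.
move=> d1 md hU.
pose K (t : option ('I_m * 'I_d.-1)) : 'M[algC]_d :=
  if t is Some (i, k) then
    U i *m delta_mx (widen_ord (leq_pred d) k) (widen_ord (leq_pred d) k) *m adj (U i)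
  else 1%:M.
have hT : (#|{: option ('I_m * 'I_d.-1)}| < d * d)%N.
  by rewrite card_option card_prod !card_ord; nia.
have [rho rho0 hrho] := exists_mxtrace_orthogonal K hT; exists rho => //.
have tr0 : \tr rho = 0 by have := hrho None; rewrite mul1mx.
split=> // i.
have diag_lt (k : 'I_d) : (k < d.-1)%N -> (adj (U i) *m rho *m U i) k k = 0.
  move=> kd; rewrite -[RHS](hrho (Some (i, Ordinal kd))) /K.
  have -> : widen_ord (leq_pred d) (Ordinal kd) = k by apply: val_inj.
  by rewrite -mxtrace_delta_mul !mulmxA mxtrace_mulC !mulmxA.
move=> k; have [|dk] := ltnP k d.-1; first exact: diag_lt.
have := mxtrace_unitary_conj rho (hU i); rewrite tr0 /mxtrace (bigD1 k) //=.
rewrite big1 ?addr0 // => k' k'k; apply: diag_lt.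
have ne : k' <> k :> nat by move/val_inj => e; rewrite e eqxx in k'k.
have := ltn_ord k'; have := ltn_ord k; lia.
Qed.

Lemma mxtrace_mp_mixture n m (p : 'I_m -> algC) (U : 'I_m -> Mat n) sigma (rho : Mat n) :
  \sum_i p i = 1 -> (forall i, unitary (U i)) -> (forall i k, density (sigma i k)) ->
  \tr (\sum_i p i *: mp_circuit (U i) (sigma i) rho) = \tr rho.
Proof.
move=> p1 hU hsigma.
have trmp i : \tr (mp_circuit (U i) (sigma i) rho) = \tr rho.
  by apply: mxtrace_mp_circuit => // k; case: (hsigma i k).
rewrite raddf_sum /=; under eq_bigr do rewrite mxtraceZ trmp.
by rewrite -mulr_suml p1 mul1r.
Qed.

Lemma D0_neq0 n (rho : Mat n.+1) : \tr rho = 0 -> rho != 0 -> D0 rho != 0.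
Proof.
move=> tr0 rho0; rewrite D0E tr0 mulr0 scale0r sub0r scalerN oppr_eq0 scaler_eq0.
rewrite (negbTE rho0) orbF invr_eq0 pnatr_eq0 subn_eq0 -ltnNge.
by rewrite -[X in (X < _)%N](expn0 2) ltn_exp2l.
Qed.

Lemma mp_mixture_size_ge n m (p : 'I_m -> algC) (U : 'I_m -> Mat n)
    (sigma : 'I_m -> 'I_(Dim n) -> Mat n) :
  \sum_i p i = 1 -> (forall i, unitary (U i)) -> (forall i k, density (sigma i k)) ->
  (forall rho, D0 rho = \sum_i p i *: mp_circuit (U i) (sigma i) rho) ->
  (2 ^ n + 1 <= m)%N.
Proof.
move=> p1 hU hsigma hD0.
case: n U sigma hU hsigma hD0 => [|n] U sigma hU hsigma hD0.
  (* For n = 0 the normalisation 1 / (2^0 - 1) is 1 / 0 = 0, so D0 vanishes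
     while every mixture preserves the trace. *)
  have := mxtrace_mp_mixture 1%:M p1 hU hsigma; rewrite -hD0 /D0 invr0 scale0r.
  by rewrite raddf0 mxtrace1 /Dim card_ffun card_ord => /esym/eqP; rewrite oner_eq0.
rewrite leqNgt addn1 ltnS; apply/negP => mDim.
have d1 : (1 < Dim n.+1)%N by rewrite DimE -[X in (X < _)%N](expn0 2) ltn_exp2l.
have [|rho rho0 [tr0 blind]] := exists_traceless_zero_diagonals d1 _ hU.
  by rewrite DimE.
have := D0_neq0 tr0 rho0; rewrite hD0 big1 ?eqxx // => i _.
by rewrite /mp_circuit big1 ?scaler0 // => k _; rewrite mxtrace_delta_mul blind scale0r.
Qed.

Theorem lemma1 (n : nat)
  (V : 'I_(2 ^ n + 1) -> Mat n)
  (f : 'I_(2 ^ n + 1) -> B n -> B n * B n)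
  (s : 'I_(2 ^ n + 1) -> B n -> algC)
  (hV : forall j, unitary (V j))
  (hs : forall j a, s j a = 1 \/ s j a = -1)
  (hdiag : forall j (a : B n), a != b0 ->
     V j *m Zop a *m adj (V j) = s j a *: pauli (f j a).1 (f j a).2)
  (hinj : forall j a j' a', a != b0 -> a' != b0 -> f j a = f j' a' ->
     j = j' /\ a = a')
  (hsurj : forall p : B n * B n, p != (b0, b0) ->
     exists j a, a != b0 /\ f j a = p) :
  (forall rho : Mat n, D0 rho = twirlM V rho) /\
  (forall (m : nat) (p : 'I_m -> algC) (U : 'I_m -> Mat n)
          (sigma : 'I_m -> 'I_(Dim n) -> Mat n),
     (forall i, 0 < p i) -> \sum_(i < m) p i = 1 ->
     (forall i, unitary (U i)) -> (forall i k, density (sigma i k)) ->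
     (forall rho : Mat n, D0 rho = \sum_(i < m) p i *: mp_circuit (U i) (sigma i) rho) ->
     (2 ^ n + 1 <= m)%N).
Proof.
split; first exact: D0_twirlM hV hs hdiag hinj hsurj.
(* The lower bound does not need the weights to be positive. *)
by move=> m p U sigma _; exact: mp_mixture_size_ge.
Qed.
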